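(* Let $G$ and $H$ be any graphs, and let $i_G$ be the number of isolated vertices of $G$. Then $$\rho_o(G\circ H)=\begin{cases}\rho_o(G)+i_G\rho_o(H)-i_G, & \text{if } H \text{ has an isolated vertex},\\ \rho(G)+i_G\rho_o(H)-i_G, & \text{otherwise.}\end{cases}$$
   Context: All graphs are finite and simple. A packing of $G$ is a set $P\subseteq V(G)$ with $N[u]\cap N[v]=\emptyset$ for all distinct $u,v\in P$ ($N[\cdot]$ the closed neighborhood); $\rho(G)$ is the maximum size of a packing. An open packing is a set $P$ whose vertices have pairwise disjoint open neighborhoods $N(\cdot)$; $\rho_o(G)$ is the maximum size of an open packing. The lexicographic product $G\circ H$ has vertex set $V(G)\times V(H)$, with $(g,h)$ adjacent to $(g',h')$ iff $gg'\in E(G)$, or ($g=g'$ and $hh'\in E(H)$). *)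

From mathcomp Require Import all_boot all_order.
Set Implicit Arguments. Unset Strict Implicit. Unset Printing Implicit Defensive.

Record sgraph := SGraph {
  vert :> finType;
  adj : rel vert;
  adj_sym : symmetric adj;
  adj_irr : irreflexive adj }.

Definition onbhd (G : sgraph) (v : G) : {set G} := [set u | adj v u].
Definition cnbhd (G : sgraph) (v : G) : {set G} := v |: onbhd v.

Definition is_packing (G : sgraph) (P : {set G}) : bool :=
  [forall u in P, forall v in P, (u != v) ==> [disjoint cnbhd u & cnbhd v]].
Definition is_open_packing (G : sgraph) (P : {set G}) : bool :=
  [forall u in P, forall v in P, (u != v) ==> [disjoint onbhd u & onbhd v]].

Definition rho (G : sgraph) : nat := \max_(P : {set G} | is_packing P) #|P|.
Definition rho_o (G : sgraph) : nat := \max_(P : {set G} | is_open_packing P) #|P|.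

Definition isolated (G : sgraph) (v : G) : bool := onbhd v == set0.
Definition num_isolated (G : sgraph) : nat := #|[set v : G | isolated v]|.
Definition has_isolated (G : sgraph) : bool := [exists v : G, isolated v].

Definition lex_adj (G H : sgraph) : rel (G * H)%type :=
  fun x y => adj x.1 y.1 || ((x.1 == y.1) && adj x.2 y.2).

Lemma lex_adj_sym G H : symmetric (@lex_adj G H).
Proof.
move=> [a b] [c d]; rewrite /lex_adj /= adj_sym [c == a]eq_sym [adj d b]adj_sym.
by [].
Qed.

Lemma lex_adj_irr G H : irreflexive (@lex_adj G H).
Proof. by move=> [a b]; rewrite /lex_adj /= !adj_irr eqxx. Qed.

Definition lexprod (G H : sgraph) : sgraph :=
  @SGraph (G * H)%type (@lex_adj G H) (@lex_adj_sym G H) (@lex_adj_irr G H).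

From mathcomp Require Import all_boot all_order ssralg ssrint.
Set Implicit Arguments. Unset Strict Implicit. Unset Printing Implicit Defensive.

(* Write I for the set of isolated vertices of G and X for rho_o(G) if H has
   an isolated vertex, rho(G) otherwise.  We prove, in nat,
       rho_o(G o H) + |I| = X + |I| * rho_o(H),
   from which the integer identity of the theorem follows at once.

   Split an open packing P of G o H into the part P_I lying
   over I and the rest P_N.  Over an isolated g the neighbourhood of (g,h)
   is {g} x N_H(h), so each fibre of P_I is an open packing of H and
   |P_I| <= |I| rho_o(H).  The first projection is injective on P_N, its
   image is an open packing of G (even a packing when H has no isolated
   vertex), and adding the isolated vertices of G keeps this property;
   hence |P_N| + |I| <= X.

   From an optimal (open) packing S of G, an optimal open
   packing T of H and a vertex h0 of H (isolated if possible), the set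
   (S \ I) x {h0}  u  I x T  is an open packing of G o H of size at least
   |S| - |I| + |I| |T|. *)

Section Packings.
Variable G : sgraph.
Implicit Types (P S A B : {set G}) (u v z : G).

Lemma isolatedP v : reflect (forall u, ~~ adj v u) (isolated v).
Proof.
apply: (iffP eqP) => [Nv u|noadj]; last by apply/setP => u; rewrite !inE (negbTE (noadj u)).
by apply/negP => vu; move/setP/(_ u): Nv; rewrite !inE vu.
Qed.

Lemma nonisolated_neighbour v : ~~ isolated v -> exists u, adj v u.
Proof.
move=> vN; case: (pickP (adj v)) => [u vu|noadj]; first by exists u.
by case/negP: vN; apply/isolatedP => u; rewrite noadj.
Qed.

Lemma open_packingP P :
  reflect (forall u v z, u \in P -> v \in P -> u != v -> adj u z -> adj v z -> False)
          (is_open_packing P).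
Proof.
apply: (iffP forallP) => [hP u v z uP vP uv uz vz|hP u].
  have := forallP (implyP (hP u) uP) v; rewrite vP uv /= => /disjointFr.
  by move=> /(_ z); rewrite !inE uz vz => /(_ erefl).
apply/implyP => uP; apply/forallP => v; apply/implyP => vP; apply/implyP => uv.
apply/pred0P => z /=; apply/negbTE/negP; rewrite !inE => /andP[uz vz].
exact: (hP u v z).
Qed.

Lemma packingP P :
  reflect (forall u v z, u \in P -> v \in P -> u != v ->
             (z == u) || adj u z -> (z == v) || adj v z -> False)
          (is_packing P).
Proof.
apply: (iffP forallP) => [hP u v z uP vP uv uz vz|hP u].
  have := forallP (implyP (hP u) uP) v; rewrite vP uv /= => /disjointFr.
  by move=> /(_ z); rewrite !inE uz vz => /(_ erefl).
apply/implyP => uP; apply/forallP => v; apply/implyP => vP; apply/implyP => uv.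
apply/pred0P => z /=; apply/negbTE/negP; rewrite !inE => /andP[uz vz].
exact: (hP u v z).
Qed.

Lemma packing_openP P :
  reflect (is_open_packing P /\ {in P &, forall u v, ~~ adj u v}) (is_packing P).
Proof.
apply: (iffP (packingP P)) => [hP|[/open_packingP hP indP] u v z uP vP uv].
  split=> [|u v uP vP]; first by apply/open_packingP => u v z uP vP uv uz vz;
    apply: (hP u v z); rewrite ?uz ?vz ?orbT.
  have [->|uv] := eqVneq u v; first by rewrite adj_irr.
  by apply/negP => uv'; apply: (hP u v v); rewrite ?eqxx ?uv' ?orbT.
case/orP=> [/eqP->|uz]; case/orP=> [/eqP zv|vz].
- by rewrite zv eqxx in uv.
- by move: (indP v u vP uP); rewrite vz.
- by move: (indP u v uP vP); rewrite -zv uz.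
- exact: (hP u v z).
Qed.

Lemma open_packingS A B : A \subset B -> is_open_packing B -> is_open_packing A.
Proof.
move=> /subsetP AB /open_packingP hB; apply/open_packingP => u v z uA vA.
exact: hB (AB u uA) (AB v vA).
Qed.

Lemma packingS A B : A \subset B -> is_packing B -> is_packing A.
Proof.
move=> /subsetP AB /packingP hB; apply/packingP => u v z uA vA.
exact: hB (AB u uA) (AB v vA).
Qed.

Lemma open_packingU A B :
  is_open_packing A -> is_open_packing B ->
  (forall a b z, a \in A -> b \in B -> adj a z -> adj b z -> False) ->
  is_open_packing (A :|: B).
Proof.
move=> /open_packingP hA /open_packingP hB cross; apply/open_packingP => u v z.
rewrite !inE => /orP[uA|uB] /orP[vA|vB] uv uz vz.
- exact: (hA u v z).
- exact: (cross u v z).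
- exact: (cross v u z).
- exact: (hB u v z).
Qed.

Lemma open_packingU_isolated S :
  is_open_packing S -> is_open_packing (S :|: [set v | isolated v]).
Proof.
move=> hS; apply: open_packingU => // [|a b z _].
  by apply/open_packingP => u v z; rewrite inE => /isolatedP/(_ z)/negP.
by rewrite inE => /isolatedP/(_ z)/negP.
Qed.

Lemma packingU_isolated S :
  is_packing S -> is_packing (S :|: [set v | isolated v]).
Proof.
case/packing_openP => /open_packingU_isolated hS indS; apply/packing_openP.
split=> // u v; rewrite !inE => /orP[uS|/isolatedP //] /orP[vS|/isolatedP vI].
  exact: indS.
by rewrite adj_sym vI.
Qed.

Lemma bigmax_card_attained (p : pred {set G}) : p set0 ->
  exists2 P, p P & #|P| = \max_(Q | p Q) #|Q|.
Proof.
move=> p0; have : 0 < #|p| by apply/card_gt0P; exists set0.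
by case/(eq_bigmax_cond (fun Q : {set G} => #|Q|)) => P pP ->; exists P.
Qed.

Lemma rho_o_max P : is_open_packing P -> #|P| <= rho_o G.
Proof. exact: (@leq_bigmax_cond _ (fun Q : {set G} => is_open_packing Q) (fun Q => #|Q|)). Qed.

Lemma rho_max P : is_packing P -> #|P| <= rho G.
Proof. exact: (@leq_bigmax_cond _ (fun Q : {set G} => is_packing Q) (fun Q => #|Q|)). Qed.

Lemma rho_o_attained : exists2 P : {set G}, is_open_packing P & #|P| = rho_o G.
Proof.
by apply: (@bigmax_card_attained (fun Q => is_open_packing Q)); apply/open_packingP => u v z; rewrite inE.
Qed.

Lemma rho_attained : exists2 P : {set G}, is_packing P & #|P| = rho G.
Proof.
by apply: (@bigmax_card_attained (fun Q => is_packing Q)); apply/packingP => u v z; rewrite inE.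
Qed.

End Packings.

Section LexicographicProduct.
Variables G H : sgraph.
Local Notation L := (lexprod G H).
Local Notation I := [set v : G | isolated v].
Implicit Types (P Q : {set L}) (x y z : L).

Lemma lex_adjE x y : adj x y = adj x.1 y.1 || ((x.1 == y.1) && adj x.2 y.2).
Proof. by []. Qed.

Lemma adj_isolated_fst (g : G) (h : H) z :
  isolated g -> adj ((g, h) : L) z = (z.1 == g) && adj h z.2.
Proof. by move/isolatedP=> gI; rewrite lex_adjE /= (negbTE (gI _)) eq_sym. Qed.

Lemma adj_fst_cnbhd (g : G) (h : H) z :
  adj ((g, h) : L) z -> (z.1 == g) || adj g z.1.
Proof. by rewrite lex_adjE /= orbC eq_sym => /orP[/andP[-> _]|->]; rewrite ?orbT. Qed.

Lemma adj_isolated_snd (g : G) (h : H) z :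
  isolated h -> adj ((g, h) : L) z -> adj g z.1.
Proof. by move/isolatedP=> hI; rewrite lex_adjE /= (negbTE (hI _)) andbF orbF. Qed.

Section UpperBound.
Variable P : {set L}.
Hypothesis hP : is_open_packing P.

Local Notation P_I := [set x in P | x.1 \in I].
Local Notation P_N := [set x in P | x.1 \notin I].

Lemma fibre_open_packing (g : G) :
  isolated g -> is_open_packing [set h | ((g, h) : L) \in P].
Proof.
move=> gI; apply/open_packingP => h h' k; rewrite !inE => hP1 hP2 hh' hk h'k.
apply: (open_packingP _ hP ((g, h) : L) (g, h') (g, k)) => //.
- by apply: contra_neq hh' => -[].
- by rewrite adj_isolated_fst //= eqxx.
- by rewrite adj_isolated_fst //= eqxx.
Qed.

Lemma card_fibre (g : G) : isolated g -> #|[set x in P | x.1 == g]| <= rho_o H.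
Proof.
move=> gI; apply: leq_trans (rho_o_max (fibre_open_packing gI)).
have pair_inj : injective (pair g : H -> L) by move=> a b [].
rewrite -(card_imset _ pair_inj); apply: subset_leq_card.
apply/subsetP => -[a b]; rewrite !inE /= => /andP[abP /eqP ag].
by apply/imsetP; exists b; rewrite ?inE -ag.
Qed.

Lemma card_part_isolated : #|P_I| <= #|I| * rho_o H.
Proof.
rewrite -sum1_card (partition_big (fun x : L => x.1) (mem I)) /=; last first.
  by move=> x; rewrite !inE => /andP[].
rewrite -sum_nat_const; apply: leq_sum => g; rewrite inE => gI.
rewrite (eq_bigl (fun x => x \in [set x in P | x.1 == g])) ?sum1_card.
  exact: card_fibre.
by move=> x; rewrite !inE; case: eqP => [->|]; rewrite ?gI ?andbT ?andbF.
Qed.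

Lemma fst_injective_part_nonisolated : {in P_N &, injective (fun x : L => x.1)}.
Proof.
move=> x y; rewrite !inE => /andP[xP xN] /andP[yP _] e.
apply/eqP/negPn/negP => xy; have [a xa] := nonisolated_neighbour xN.
apply: (open_packingP _ hP x y (a, x.2)) => //; by rewrite lex_adjE /= -?e xa.
Qed.

(* Two elements of P_N over distinct g, g' with a common neighbour z in G
   would share the neighbour (z, _) in G o H. *)
Lemma fst_open_packing : is_open_packing [set x.1 | x in P_N].
Proof.
apply/open_packingP => u v z /imsetP[x] + -> /imsetP[y] + ->.
rewrite !inE => /andP[xP _] /andP[yP _] uv xz yz.
apply: (open_packingP _ hP x y (z, x.2)) => //; last by rewrite lex_adjE yz.
- by apply: contraNneq uv => ->.
- by rewrite lex_adjE xz.
Qed.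

Lemma fst_packing : ~~ has_isolated H -> is_packing [set x.1 | x in P_N].
Proof.
move=> noI; apply/packing_openP; split; first exact: fst_open_packing.
move=> u v /imsetP[x] + -> /imsetP[y] + ->; rewrite !inE => /andP[xP _] /andP[yP _].
have [-> | uv] := eqVneq x.1 y.1; first by rewrite adj_irr.
apply/negP => xy; have [b xb] : exists b, adj x.2 b.
  by apply: nonisolated_neighbour; apply: contra noI => xI; apply/existsP; exists x.2.
apply: (open_packingP _ hP x y (x.1, b)) => //.
- by apply: contraNneq uv => ->.
- by rewrite lex_adjE /= eqxx xb orbT.
- by rewrite lex_adjE /= adj_sym xy.
Qed.

(* The projection of P_N, enlarged by the isolated vertices of G, is an open
   packing of G, and a packing when H has no isolated vertex. *)
Lemma card_part_nonisolated :
  #|P_N| + #|I| <= (if has_isolated H then rho_o G else rho G).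
Proof.
have disjSI : [set x.1 | x in P_N] :&: I = set0.
  apply/setP => g; rewrite !inE; apply/negbTE/andP => -[/imsetP[x + ->]].
  by rewrite !inE => /andP[_ /negPf ->].
rewrite -(card_in_imset fst_injective_part_nonisolated) -[_ + _]subn0 -(cards0 G).
rewrite -disjSI -cardsU.
case: ifP => hasI.
  exact/rho_o_max/open_packingU_isolated/fst_open_packing.
by apply/rho_max/packingU_isolated/fst_packing; rewrite hasI.
Qed.

End UpperBound.

Lemma rho_o_lex_ub :
  rho_o L + #|I| <= (if has_isolated H then rho_o G else rho G) + #|I| * rho_o H.
Proof.
have [P hP <-] := rho_o_attained L.
have -> : #|P| = #|[set x in P | x.1 \in I]| + #|[set x in P | x.1 \notin I]|.
  rewrite -(cardsID [set x : L | x.1 \in I] P).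
  by congr (_ + _); apply: eq_card => x; rewrite !inE andbC.
rewrite -addnA addnC leq_add ?card_part_isolated //.
exact: card_part_nonisolated.
Qed.

Lemma layer_open_packing (S : {set G}) (h0 : H) :
  (if isolated h0 then is_open_packing S else is_packing S) ->
  @is_open_packing L (setX S [set h0]).
Proof.
move=> hS; apply/open_packingP => -[g h] [g' h'] z; rewrite !inE /=.
move=> /andP[gS /eqP->] /andP[g'S /eqP->] ne gz g'z.
have gg' : g != g' by apply: contraNneq ne => ->.
move: hS; case: ifP => h0I.
  move/open_packingP=> hS; apply: (hS g g' z.1) => //.
    exact: (adj_isolated_snd h0I gz).
  exact: (adj_isolated_snd h0I g'z).
move/packingP=> hS; apply: (hS g g' z.1) => //.
  exact: (adj_fst_cnbhd gz).
exact: (adj_fst_cnbhd g'z).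
Qed.

Lemma isolated_fibres_open_packing (T : {set H}) :
  is_open_packing T -> @is_open_packing L (setX I T).
Proof.
move/open_packingP=> hT; apply/open_packingP => -[g h] [g' h'] z.
move=> /setXP[+ hT1] /setXP[+ hT2]; rewrite !inE => gI g'I ne.
rewrite !adj_isolated_fst // => /andP[/eqP zg hz] /andP[/eqP zg' h'z].
apply: (hT h h' z.2) => //; apply: contraNneq ne => ->.
by rewrite -zg -zg'.
Qed.

(* The layer over the non-isolated part of S and the copies of T over I have no
   common neighbour, since neighbours of I x H stay in I x H. *)
Lemma lex_open_packing (S : {set G}) (h0 : H) (T : {set H}) :
  (if isolated h0 then is_open_packing S else is_packing S) -> is_open_packing T ->
  @is_open_packing L (setX (S :\: I) [set h0] :|: setX I T).
Proof.
move=> hS hT; apply: open_packingU; last 2 first.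
- exact: isolated_fibres_open_packing.
- move=> [g h] [g' h'] z /setXP[+ _] /setXP[+ _]; rewrite !inE => /andP[gN _] g'I gz.
  rewrite adj_isolated_fst // => /andP[/eqP zg' _].
  case/orP: (adj_fst_cnbhd gz); rewrite zg'.
    by move/eqP=> e; rewrite -e g'I in gN.
  by move/isolatedP: g'I => g'I; rewrite adj_sym (negbTE (g'I g)).
apply: layer_open_packing; move: hS; case: ifP => _.
  by apply: open_packingS; apply: subsetDl.
by apply: packingS; apply: subsetDl.
Qed.

Lemma optimal_layer : 0 < #|H| ->
  exists h0 : H, exists2 S : {set G},
    (if isolated h0 then is_open_packing S else is_packing S) &
    #|S| = if has_isolated H then rho_o G else rho G.
Proof.
move=> Hne; case: ifP => [/existsP[h0 h0I] | noI].
  by exists h0; rewrite h0I; apply: rho_o_attained.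
case/card_gt0P: Hne => h0 _; exists h0.
have -> : isolated h0 = false by apply: contraFF noI => h0I; apply/existsP; exists h0.
exact: rho_attained.
Qed.

Lemma rho_o_lex_lb : 0 < #|H| ->
  (if has_isolated H then rho_o G else rho G) + #|I| * rho_o H <= rho_o L + #|I|.
Proof.
move=> Hne; have [T hT <-] := rho_o_attained H.
have [h0 [S hS <-]] := optimal_layer Hne; set Q := setX (S :\: I) [set h0] :|: setX I T.
apply: (@leq_trans (#|Q| + #|I|)); last first.
  by rewrite leq_add2r; apply: rho_o_max; apply: lex_open_packing.
have disj : setX (S :\: I) [set h0] :&: setX I T = set0.
  apply/setP => -[g h]; rewrite !inE /=; apply/negbTE/andP.
  by case=> /andP[/andP[/negP gN _] _] /andP[/gN].
rewrite cardsU disj cards0 subn0 !cardsX cards1 muln1 addnAC leq_add2r.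
by rewrite -(cardsID I S) addnC leq_add2l setIC subset_leq_card ?subsetIl.
Qed.

End LexicographicProduct.

Lemma rho_o_lex_nat (G H : sgraph) : 0 < #|H| ->
  rho_o (lexprod G H) + num_isolated G =
  (if has_isolated H then rho_o G else rho G) + num_isolated G * rho_o H.
Proof. by move=> Hne; apply/eqP; rewrite eqn_leq rho_o_lex_ub rho_o_lex_lb. Qed.

Theorem mainTheorem9 (G H : sgraph) (HnonEmpty : 0 < #|H|) :
  ((rho_o (lexprod G H))%:Z =
   if has_isolated H then
     (rho_o G)%:Z + (num_isolated G)%:Z * (rho_o H)%:Z - (num_isolated G)%:Z
   else
     (rho G)%:Z + (num_isolated G)%:Z * (rho_o H)%:Z - (num_isolated G)%:Z)%R.
Proof.
have E := rho_o_lex_nat G HnonEmpty.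
by case: ifP E => _ E; rewrite -PoszM -PoszD -E PoszD GRing.addrK.
Qed.
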